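(* The set $A = \{2^j : j \geq 2\} \cup \{3^k : k \geq 2\}$ is fractionally dense and contains no arithmetic progression of length three.
   Context: $\mathbb{N} = \{1,2,3,\ldots\}$. For $A \subseteq \mathbb{N}$, the quotient set is $R(A) = \{a/a' : a, a' \in A\}$, and $A$ is called fractionally dense if the closure of $R(A)$ in $\mathbb{R}$ equals $[0,\infty)$. An arithmetic progression of length three in $A$ is a triple $c, c+d, c+2d$ of elements of $A$ with $d \geq 1$ an integer. *)

From Stdlib Require Import Reals Lra Lia.
Open Scope R_scope.

(* Subsets of N = {1,2,3,...} are predicates on nat; membership implies n >= 1. *)

Definition quotient_set (A : nat -> Prop) (x : R) : Prop :=
  exists a a' : nat, A a /\ A a' /\ x = INR a / INR a'.

Definition closure_R (S : R -> Prop) (x : R) : Prop :=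
  forall eps : R, 0 < eps -> exists y : R, S y /\ Rabs (y - x) < eps.

Definition fractionally_dense (A : nat -> Prop) : Prop :=
  (forall a : nat, A a -> (1 <= a)%nat) /\
  (forall x : R, closure_R (quotient_set A) x <-> 0 <= x).

Definition has_3AP (A : nat -> Prop) : Prop :=
  exists c d : nat, (1 <= d)%nat /\ A c /\ A (c + d)%nat /\ A (c + 2 * d)%nat.

Definition A_23 (n : nat) : Prop :=
  (exists j : nat, (2 <= j)%nat /\ n = (2 ^ j)%nat) \/
  (exists k : nat, (2 <= k)%nat /\ n = (3 ^ k)%nat).

From Stdlib Require Import Reals Lra Lia ZifyNat List Classical.

(* Density: by pigeonhole, some ratio r = 3^c / 2^d or 2^d / 3^c lies in (1, 1 + eps);
   a geometric progression with ratio r, started at an arbitrarily small element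
   2^2 / 3^K or 3^2 / 2^K of R(A), stays in R(A) and meets every interval [x, x r].
   No AP: modulo 8 the two largest terms y < z of x + z = 2y are powers of the same
   base p, so z >= p y >= 2 y = x + z, which is absurd. *)

Lemma pow2_mod4 (j : nat) : (2 <= j)%nat -> (2 ^ j mod 4 = 0)%nat.
Proof.
  intros Hj. replace j with (2 + (j - 2))%nat by lia.
  rewrite Nat.pow_add_r. change (2 ^ 2)%nat with 4%nat.
  rewrite Nat.mul_comm. apply Nat.Div0.mod_mul.
Qed.

Lemma pow3_mod8 (k : nat) : (3 ^ k mod 8 = 1 \/ 3 ^ k mod 8 = 3)%nat.
Proof.
  induction k as [|k IH]; [now left|].
  rewrite Nat.pow_succ_r'. lia.
Qed.

Lemma A_23_pos (n : nat) : A_23 n -> (1 <= n)%nat.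
Proof.
  intros [[j [_ ->]] | [k [_ ->]]].
  - pose proof (Nat.pow_nonzero 2 j). lia.
  - pose proof (Nat.pow_nonzero 3 k). lia.
Qed.

Lemma pow_lt_mul_le (p i k : nat) : (1 < p)%nat -> (p ^ i < p ^ k)%nat -> (p * p ^ i <= p ^ k)%nat.
Proof.
  intros Hp Hik. rewrite <- Nat.pow_succ_r'. apply Nat.pow_le_mono_r; [lia|].
  apply (Nat.pow_lt_mono_r_iff p) in Hik; lia.
Qed.

(* Modulo 8, [2 ^ j] (j >= 2) is 0 or 4 and [3 ^ k] is 1 or 3, so [x + z = 2 y]
   cannot mix the two bases in its two largest terms. *)
Lemma A_23_3AP_same_base (x y z : nat) :
  A_23 x -> A_23 y -> A_23 z -> (x + z = 2 * y)%nat ->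
  exists p b e : nat, (1 < p)%nat /\ y = (p ^ b)%nat /\ z = (p ^ e)%nat.
Proof.
  intros Hx Hy Hz E.
  destruct Hy as [[b [Hb ->]] | [b [Hb ->]]]; destruct Hz as [[e [He ->]] | [e [He ->]]];
    try (do 3 eexists; split; [|split; reflexivity]; lia);
    pose proof (pow3_mod8 b); pose proof (pow3_mod8 e);
    destruct Hx as [[a [Ha ->]] | [a [Ha ->]]];
    repeat match goal with H : (2 <= ?i)%nat |- _ => pose proof (pow2_mod4 i H); clear H end;
    pose proof (pow3_mod8 a); exfalso; lia.
Qed.

Lemma A_23_no_3AP : ~ has_3AP A_23.
Proof.
  intros [c [d [Hd [Hx [Hy Hz]]]]].
  destruct (A_23_3AP_same_base c (c + d) (c + 2 * d) Hx Hy Hz ltac:(lia))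
    as [p [b [e [Hp [Eb Ee]]]]].
  pose proof (pow_lt_mul_le p b e Hp ltac:(lia)). pose proof (A_23_pos c Hx). nia.
Qed.

Lemma pigeonhole_nat (N m : nat) (f : nat -> nat) :
  (forall b, (b <= N)%nat -> (m <= f b < m + N)%nat) ->
  exists b b', (b < b' <= N)%nat /\ f b = f b'.
Proof.
  intros Hf. apply NNPP. intros Hinj.
  assert (Hnodup : NoDup (map f (seq 0 (S N)))).
  { apply NoDup_map_NoDup_ForallPairs; [|apply seq_NoDup].
    intros b b' Hb Hb' E. apply in_seq in Hb, Hb'.
    destruct (Nat.lt_total b b') as [H|[H|H]]; [| exact H |]; exfalso; apply Hinj.
    - exists b, b'. split; [lia | exact E].
    - exists b', b. split; [lia | symmetry; exact E]. }
  assert (Hincl : incl (map f (seq 0 (S N))) (seq m N)).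
  { intros y Hy. apply in_map_iff in Hy as [b [<- Hb]].
    apply in_seq in Hb. apply in_seq. apply Hf. lia. }
  pose proof (NoDup_incl_length Hnodup Hincl) as Hlen.
  rewrite length_map, !length_seq in Hlen. lia.
Qed.

Lemma INR_2 : INR 2 = 2.
Proof. simpl. ring. Qed.

Lemma INR_3 : INR 3 = 3.
Proof. simpl. ring. Qed.

Lemma INR_div_bounds (a m : nat) :
  (0 < m)%nat -> INR (a / m) <= INR a / INR m < INR (a / m) + 1.
Proof.
  intros Hm. pose proof (Nat.div_mod a m ltac:(lia)) as Ediv.
  pose proof (Nat.mod_upper_bound a m ltac:(lia)) as Hmod.
  assert (Hm' : 0 < INR m) by (apply lt_0_INR; lia).
  assert (Ea : INR a = INR m * INR (a / m) + INR (a mod m)).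
  { rewrite Ediv at 1. now rewrite plus_INR, mult_INR. }
  apply lt_INR in Hmod. pose proof (pos_INR (a mod m)).
  assert (Ediv_R : INR a / INR m * INR m = INR a) by (field; lra).
  split; [apply (Rmult_le_reg_r (INR m)) | apply (Rmult_lt_reg_r (INR m))];
    rewrite ?Ediv_R; lra.
Qed.

Lemma Rabs_div_sub1_lt (u v d : R) :
  1 <= v -> 0 < u -> Rabs (u - v) < d -> Rabs (u / v - 1) < d.
Proof.
  intros Hv Hu Huv.
  replace (u / v - 1) with ((u - v) / v) by (field; lra).
  unfold Rdiv. rewrite Rabs_mult, Rabs_inv, (Rabs_pos_eq v) by lra.
  apply (Rle_lt_trans _ (Rabs (u - v) * 1)); [|lra].
  apply Rmult_le_compat_l; [apply Rabs_pos|].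
  rewrite <- Rinv_1. apply Rinv_le_contravar; lra.
Qed.

Lemma pow3_neq_pow2 (c d : nat) : (1 <= c)%nat -> (3 ^ c <> 2 ^ d)%nat.
Proof.
  intros Hc E. destruct d as [|d].
  - pose proof (Nat.pow_le_mono_r 3 1 c ltac:(lia) Hc). simpl in *. lia.
  - rewrite Nat.pow_succ_r' in E. pose proof (pow3_mod8 c). lia.
Qed.

Definition pow3_normalised (b : nat) : R := 3 ^ b / 2 ^ Nat.log2 (3 ^ b).

Lemma log2_pow3_spec (b : nat) : (2 ^ Nat.log2 (3 ^ b) <= 3 ^ b < 2 * 2 ^ Nat.log2 (3 ^ b))%nat.
Proof. apply Nat.log2_spec. pose proof (Nat.pow_nonzero 3 b). lia. Qed.

Lemma pow3_normalised_ge1 (b : nat) : 1 <= pow3_normalised b.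
Proof.
  pose proof (log2_pow3_spec b) as [Hlo _]. apply le_INR in Hlo.
  rewrite !pow_INR, INR_2, INR_3 in Hlo.
  assert (0 < 2 ^ Nat.log2 (3 ^ b)) by (apply pow_lt; lra).
  unfold pow3_normalised. apply (Rmult_le_reg_r (2 ^ Nat.log2 (3 ^ b))); [lra|].
  field_simplify; lra.
Qed.

Lemma pow3_normalised_floor (N b : nat) :
  let k := (N * 3 ^ b / 2 ^ Nat.log2 (3 ^ b))%nat in
  INR k <= INR N * pow3_normalised b < INR k + 1.
Proof.
  pose proof (Nat.pow_nonzero 2 (Nat.log2 (3 ^ b))).
  pose proof (INR_div_bounds (N * 3 ^ b) (2 ^ Nat.log2 (3 ^ b)) ltac:(lia)) as Hdiv.
  rewrite mult_INR, !pow_INR, INR_2, INR_3 in Hdiv.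
  unfold pow3_normalised. now rewrite Rmult_div_assoc.
Qed.

(* The [N + 1] values [N * pow3_normalised b], b = 0..N, have integer parts in [N, 2N). *)
Lemma pow3_normalised_close (N : nat) : (0 < N)%nat ->
  exists b b', (b < b')%nat /\ Rabs (pow3_normalised b' - pow3_normalised b) < / INR N.
Proof.
  intros HN.
  set (key b := (N * 3 ^ b / 2 ^ Nat.log2 (3 ^ b))%nat).
  destruct (pigeonhole_nat N N key) as [b [b' [Hbb' Ekey]]].
  { intros b _. pose proof (log2_pow3_spec b).
    pose proof (Nat.pow_nonzero 2 (Nat.log2 (3 ^ b))). split.
    - apply Nat.div_le_lower_bound; nia.
    - apply Nat.Div0.div_lt_upper_bound. nia. }
  exists b, b'. split; [lia|].
  pose proof (pow3_normalised_floor N b) as Hb. pose proof (pow3_normalised_floor N b') as Hb'.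
  fold (key b) (key b') in Hb, Hb'. rewrite Ekey in Hb.
  assert (HNpos : 0 < INR N) by (apply lt_0_INR; lia).
  apply Rabs_def1; apply (Rmult_lt_reg_l (INR N)); try lra;
    rewrite ?Rmult_minus_distr_l, ?Ropp_mult_distr_r_reverse, Rinv_r; lra.
Qed.

Lemma pow3_normalised_ratio (b b' : nat) : (b <= b')%nat ->
  pow3_normalised b' / pow3_normalised b
  = 3 ^ (b' - b) / 2 ^ (Nat.log2 (3 ^ b') - Nat.log2 (3 ^ b)).
Proof.
  intros Hbb'.
  assert (Hmono : (Nat.log2 (3 ^ b) <= Nat.log2 (3 ^ b'))%nat).
  { apply Nat.log2_le_mono, Nat.pow_le_mono_r; lia. }
  unfold pow3_normalised.
  set (L := Nat.log2 (3 ^ b)) in *. set (L' := Nat.log2 (3 ^ b')) in *.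
  replace (2 ^ L') with (2 ^ L * 2 ^ (L' - L)) by (rewrite <- pow_add; f_equal; lia).
  replace (3 ^ b') with (3 ^ b * 3 ^ (b' - b)) by (rewrite <- pow_add; f_equal; lia).
  field. repeat split; apply pow_nonzero; lra.
Qed.

Lemma pow3_pow2_near_one (eps : R) : 0 < eps ->
  exists c d : nat, (1 <= c)%nat /\
    Rabs (3 ^ c / 2 ^ d - 1) < eps /\ Rabs (2 ^ d / 3 ^ c - 1) < eps.
Proof.
  intros Heps. destruct (archimed_cor1 eps Heps) as [N [HNeps HN]].
  destruct (pow3_normalised_close N HN) as [b [b' [Hbb' Hclose]]].
  pose proof (pow3_normalised_ge1 b). pose proof (pow3_normalised_ge1 b').
  exists (b' - b)%nat, (Nat.log2 (3 ^ b') - Nat.log2 (3 ^ b))%nat. split; [lia|].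
  rewrite <- (Rinv_div (3 ^ (b' - b))), <- !pow3_normalised_ratio, Rinv_div by lia.
  split; apply Rabs_div_sub1_lt; try lra.
  rewrite Rabs_minus_sym. lra.
Qed.

Lemma geometric_crossing (r s x : R) :
  1 < r -> 0 < s <= x -> exists n : nat, x <= s * r ^ n <= x * r.
Proof.
  intros Hr Hs.
  assert (Hfirst : forall m : nat, x <= s * r ^ m -> exists n : nat, x <= s * r ^ n <= x * r).
  { induction m as [|m IH]; intros Hm.
    - exists 0%nat. simpl in *. nra.
    - destruct (Rle_lt_dec x (s * r ^ m)) as [Hle|Hlt]; [now apply IH|].
      exists (S m). simpl in *. nra. }
  destruct (Pow_x_infinity r ltac:(rewrite Rabs_pos_eq; lra) (x / s)) as [m Hm].
  specialize (Hm m (le_n m)). rewrite Rabs_pos_eq in Hm by (apply pow_le; lra).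
  apply Hfirst with m.
  replace x with (s * (x / s)) at 1 by (field; lra).
  apply Rmult_le_compat_l; lra.
Qed.

Lemma geometric_approx (S : R -> Prop) (r x eps : R) :
  1 < r -> x * (r - 1) < eps -> (exists s, 0 < s <= x /\ forall n : nat, S (s * r ^ n)) ->
  exists y, S y /\ Rabs (y - x) < eps.
Proof.
  intros Hr Hx [s [Hs HS]].
  destruct (geometric_crossing r s x Hr Hs) as [n Hn].
  exists (s * r ^ n). split; [apply HS|].
  rewrite Rabs_pos_eq by lra. lra.
Qed.

Lemma pow_unbounded_ge2 (q B : R) : 1 < q -> exists K : nat, (2 <= K)%nat /\ B <= q ^ K.
Proof.
  intros Hq. destruct (Pow_x_infinity q ltac:(rewrite Rabs_pos_eq; lra) B) as [N HN].
  exists (Nat.max N 2). split; [lia|].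
  specialize (HN (Nat.max N 2) ltac:(lia)).
  rewrite Rabs_pos_eq in HN by (apply pow_le; lra). lra.
Qed.

Lemma quotient_set_A_23_pow2_pow3 (j k : nat) :
  (2 <= j)%nat -> (2 <= k)%nat -> quotient_set A_23 (2 ^ j / 3 ^ k).
Proof.
  intros Hj Hk. exists (2 ^ j)%nat, (3 ^ k)%nat.
  split; [left; eauto | split; [right; eauto|]].
  now rewrite !pow_INR, INR_2, INR_3.
Qed.

Lemma quotient_set_A_23_pow3_pow2 (j k : nat) :
  (2 <= j)%nat -> (2 <= k)%nat -> quotient_set A_23 (3 ^ j / 2 ^ k).
Proof.
  intros Hj Hk. exists (3 ^ j)%nat, (2 ^ k)%nat.
  split; [right; eauto | split; [left; eauto|]].
  now rewrite !pow_INR, INR_2, INR_3.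
Qed.

(* Start from [s = p^2 / q^K] with K large; then [s * (p^d / q^c)^n = p^(2+dn) / q^(K+cn)]. *)
Lemma quotient_set_geometric (p q x : R) (c d : nat) :
  0 < p -> 1 < q -> 0 < x ->
  (forall j k : nat, (2 <= j)%nat -> (2 <= k)%nat -> quotient_set A_23 (p ^ j / q ^ k)) ->
  exists s, 0 < s <= x /\ forall n : nat, quotient_set A_23 (s * (p ^ d / q ^ c) ^ n).
Proof.
  intros Hp Hq Hx HQ.
  destruct (pow_unbounded_ge2 q (p ^ 2 / x) Hq) as [K [HK HqK]].
  assert (HqK0 : 0 < q ^ K) by (apply pow_lt; lra).
  exists (p ^ 2 / q ^ K). split; [split|].
  - apply Rdiv_lt_0_compat; [apply pow_lt|]; lra.
  - apply (Rmult_le_reg_r (q ^ K / x)); [apply Rdiv_lt_0_compat; lra|].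
    replace (p ^ 2 / q ^ K * (q ^ K / x)) with (p ^ 2 / x) by (field; lra).
    replace (x * (q ^ K / x)) with (q ^ K) by (field; lra). exact HqK.
  - intros n.
    replace (p ^ 2 / q ^ K * (p ^ d / q ^ c) ^ n) with (p ^ (2 + d * n) / q ^ (K + c * n)).
    + apply HQ; lia.
    + rewrite !pow_add, !pow_mult. unfold Rdiv. rewrite Rpow_mult_distr, pow_inv.
      field. split; repeat apply pow_nonzero; lra.
Qed.

Lemma A_23_quotients_approx_pos (x eps : R) : 0 < x -> 0 < eps ->
  exists y, quotient_set A_23 y /\ Rabs (y - x) < eps.
Proof.
  intros Hx Heps.
  destruct (pow3_pow2_near_one (eps / x) ltac:(apply Rdiv_lt_0_compat; lra))
    as [c [d [Hc [H32 H23]]]].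
  assert (Hneq : 3 ^ c <> 2 ^ d).
  { intros E. apply (pow3_neq_pow2 c d Hc), INR_eq. now rewrite !pow_INR, INR_2, INR_3. }
  assert (H2 : 0 < 2 ^ d) by (apply pow_lt; lra).
  assert (H3 : 0 < 3 ^ c) by (apply pow_lt; lra).
  assert (Hstep : forall r, 1 < r -> Rabs (r - 1) < eps / x -> x * (r - 1) < eps).
  { intros r Hr Hrx. rewrite Rabs_pos_eq in Hrx by lra.
    apply (Rmult_lt_compat_l x) in Hrx; [|lra].
    replace (x * (eps / x)) with eps in Hrx by (field; lra). exact Hrx. }
  destruct (Rlt_or_le (2 ^ d) (3 ^ c)) as [Hlt|Hle].
  - assert (Hr : 1 < 3 ^ c / 2 ^ d).
    { apply (Rmult_lt_reg_r (2 ^ d)); [lra|]. field_simplify; lra. }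
    apply (geometric_approx _ (3 ^ c / 2 ^ d)); auto.
    apply quotient_set_geometric; try lra. exact quotient_set_A_23_pow3_pow2.
  - assert (Hr : 1 < 2 ^ d / 3 ^ c).
    { apply (Rmult_lt_reg_r (3 ^ c)); [lra|]. field_simplify; lra. }
    apply (geometric_approx _ (2 ^ d / 3 ^ c)); auto.
    apply quotient_set_geometric; try lra. exact quotient_set_A_23_pow2_pow3.
Qed.

Lemma A_23_quotients_approx (x eps : R) : 0 <= x -> 0 < eps ->
  exists y, quotient_set A_23 y /\ Rabs (y - x) < eps.
Proof.
  intros Hx Heps. destruct (Rle_lt_or_eq_dec 0 x Hx) as [Hpos | <-].
  - now apply A_23_quotients_approx_pos.
  - destruct (A_23_quotients_approx_pos (eps / 2) (eps / 2)) as [y [Hy Hyx]]; try lra.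
    exists y. split; [exact Hy|].
    apply Rabs_def2 in Hyx. rewrite Rminus_0_r, Rabs_pos_eq; lra.
Qed.

Lemma closure_R_nonneg (S : R -> Prop) (x : R) :
  (forall y, S y -> 0 <= y) -> closure_R S x -> 0 <= x.
Proof.
  intros HS Hx. destruct (Rle_lt_dec 0 x) as [H|H]; [exact H|].
  destruct (Hx (- x) ltac:(lra)) as [y [Hy Hyx]].
  pose proof (HS y Hy). apply Rabs_def2 in Hyx. lra.
Qed.

Lemma quotient_set_A_23_nonneg (y : R) : quotient_set A_23 y -> 0 <= y.
Proof.
  intros [a [a' [_ [Ha' ->]]]].
  apply Rle_mult_inv_pos; [apply pos_INR | apply lt_0_INR, A_23_pos, Ha'].
Qed.

Theorem proposition4 : fractionally_dense A_23 /\ ~ has_3AP A_23.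
Proof.
  split; [split|].
  - exact A_23_pos.
  - intros x. split.
    + apply closure_R_nonneg, quotient_set_A_23_nonneg.
    + intros Hx eps Heps. now apply A_23_quotients_approx.
  - exact A_23_no_3AP.
Qed.
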